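(* Let $P$ be a set of $n$ points in the plane in convex position, let $S$ be an optimal dominating set of $G(P)$ with $k=|S|$, let $\phi:\mathcal{A}\rightarrow S$ be an assignment satisfying properties (1)–(3) below, and let $(p_i,p_j)$ be a decoupling pair for $\phi$. Properties: (1) $\phi$ is line separable; (2) each center $p\in S$ is assigned at most two sublists, one of which contains $p$; (3) for any center $p_a$ assigned a second sublist $\beta_a$ (not containing $p_a$), there exist $p_t\in\beta_a$ and centers $q_1,q_2\in S$ with $q_1\in P(a,t)$, $q_2\in P(t,a)$, $p_t\notin D_{q_1}$, $p_t\notin D_{q_2}$. Then there exists an ordering $p_{i_1},p_{i_2},\ldots,p_{i_k}$ of all centers of $S$ such that: (i) $p_{i_1}=p_i$ and $p_{i_k}=p_j$; (ii) the sequence of centers of $S$ having at least one sublist in $P[i,j]$, ordered by the positions of their sublists along $P[i,j]$ from $p_i$ to $p_j$, is a (not necessarily contiguous) subsequence of the ordering, and likewise the sequence of centers having at least one sublist in $P[j,i]$, ordered by the positions of their sublists along $P[j,i]$ from $p_i$ to $p_j$, is a subsequence of the ordering; (iii) for every $1\le t\le k$, the union $\bigcup_{l=1}^{t}G_{i_l}$ of the groups of the first $t$ centers is a sublist of $P$; (iv) for every $2\le t\le k$, $\bigcup_{l=1}^{t-1}G_{i_l}\subseteq\bigcup_{l=1}^{t}G_{i_l}$; (v) for every $1\le t\le k$, each sublist assigned to $p_{i_t}$ appears at one end of $\bigcup_{l=1}^{t}G_{i_l}$ (for $t=k$ this union is the whole cyclic list, which is viewed as a list by cutting it right after the clockwise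 endpoint of $G_{i_k}$).
   Context: $P$ is in convex position (every point is a hull vertex), no three points collinear, no four cocircular; $P$ is the cyclic list $\langle p_1,\dots,p_n\rangle$ counterclockwise along the hull. A sublist is a contiguous subsequence of the cyclic list. $P[i,j]$ is the sublist from $p_i$ counterclockwise to $p_j$ inclusive; $P(i,j)$ excludes $p_i,p_j$. $D_p$ is the closed unit disk centered at $p$. $G(P)$ has an edge between two points of $P$ iff their distance is at most $1$. A dominating set $S\subseteq P$: every point of $P$ is in $S$ or within distance $1$ of a point of $S$; its points are centers. Optimal dominating set: the points carry positive weights and $S$ is a dominating set of minimum total weight (unit weights give the minimum-cardinality case). A partition $\mathcal{A}$ of $P$ is a partition of the cyclic list into consecutive nonempty disjoint sublists. An assignment $\phi:\mathcal{A}\to S$ maps each sublist $\alpha$ to one center $p$ with $\alpha\subseteq D_p$; the group $G_p$ (written $G_{i_l}$ for $p=p_{i_l}$) is the set of points in sublists assigned to $p$. $\phi$ is line separable if for every two distinct centers some line has the points of one group on one side or on the line and those of the other group strictly on the other side. A decoupling pair is a pair of centers $(p_i,p_j)$ such that each of $p_i,p_j$ is assigned only one sublist, and every center assigned two sublists has one in $P(i,j)$ and the other in $P(j,i)$. *)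

From HB Require Import structures.
From mathcomp Require Import all_boot all_order all_algebra.
From mathcomp Require Import reals.

Set Implicit Arguments.
Unset Strict Implicit.
Unset Printing Implicit Defensive.

Import Order.TTheory GRing.Theory Num.Theory.
Local Open Scope ring_scope.

Section Defs.
Variable R : realType.
Variable n : nat.
Variable p : 'I_n -> R * R.

Definition dist2 (u v : R * R) : R := (u.1 - v.1) ^+ 2 + (u.2 - v.2) ^+ 2.

Definition orient (u v w : R * R) : R :=
  (v.1 - u.1) * (w.2 - u.2) - (v.2 - u.2) * (w.1 - u.1).

Definition in_hull_of_others (a : 'I_n) : Prop :=
  exists lam : 'I_n -> R,
    [/\ forall b, 0 <= lam b, lam a = 0, \sum_b lam b = 1,
        \sum_b lam b * (p b).1 = (p a).1 & \sum_b lam b * (p b).2 = (p a).2].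

Definition cocircular4 (a b c d : 'I_n) : Prop :=
  exists (cx cy r : R), forall x, x \in [:: a; b; c; d] ->
    ((p x).1 - cx) ^+ 2 + ((p x).2 - cy) ^+ 2 = r.

(* Standing assumptions: convex position (every point a hull vertex),
   no three collinear, no four cocircular, indices listed counterclockwise. *)
Definition standing_assumptions : Prop :=
  [/\ forall a, ~ in_hull_of_others a,
      forall a b c : 'I_n, a != b -> b != c -> a != c -> orient (p a) (p b) (p c) != 0,
      forall a b c d : 'I_n, uniq [:: a; b; c; d] -> ~ cocircular4 a b c d
    & forall a b c : 'I_n, (a < b < c)%N -> 0 < orient (p a) (p b) (p c)].

Definition in_disk (c x : 'I_n) : bool := dist2 (p c) (p x) <= 1.

Definition gedge (a b : 'I_n) : bool := (a != b) && (dist2 (p a) (p b) <= 1).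

Definition dominating (S : {set 'I_n}) : Prop :=
  forall x : 'I_n, x \in S \/ exists2 s, s \in S & gedge s x.

Definition optimal_dominating (w : 'I_n -> R) (S : {set 'I_n}) : Prop :=
  dominating S /\
  forall T : {set 'I_n}, dominating T -> \sum_(x in S) w x <= \sum_(x in T) w x.

Definition off (s x : 'I_n) : nat := ((x + n - s) %% n)%N.

(* the sublist starting at (the index) s %% n of length len (counterclockwise) *)
Definition arc (s len : nat) : {set 'I_n} :=
  [set x : 'I_n | ((x + n - s %% n) %% n < len)%N].

Definition is_sublist (U : {set 'I_n}) : Prop :=
  exists s len : nat, [/\ (0 < len <= n)%N & U = arc s len].

Definition Pcc (i j : 'I_n) : {set 'I_n} := arc i (off i j).+1.
Definition Poo (i j : 'I_n) : {set 'I_n} :=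
  [set x : 'I_n | (0 < off i x < off i j)%N].

Definition walk (i j : 'I_n) : seq 'I_n :=
  [seq insubd i ((i + m) %% n)%N | m <- iota 0 (off i j).+1].

Variable A : {set {set 'I_n}}.
Variable phi : {set 'I_n} -> 'I_n.
Variable S : {set 'I_n}.

Definition is_partition : Prop :=
  partition A [set: 'I_n] /\ forall B, B \in A -> is_sublist B.

Definition is_assignment : Prop :=
  forall B, B \in A -> phi B \in S /\ (forall x, x \in B -> in_disk (phi B) x).

Definition assigned (c : 'I_n) : {set {set 'I_n}} := [set B in A | phi B == c].
Definition group (c : 'I_n) : {set 'I_n} := \bigcup_(B in assigned c) B.

Definition weakly_sep (X Y : {set 'I_n}) : Prop :=
  exists (al be ga : R), [/\ (al != 0) || (be != 0),
    forall x, x \in X -> al * (p x).1 + be * (p x).2 <= ga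
  & forall y, y \in Y -> ga < al * (p y).1 + be * (p y).2].

Definition line_separable : Prop :=
  forall c d, c \in S -> d \in S -> c != d ->
    weakly_sep (group c) (group d) \/ weakly_sep (group d) (group c).

Definition property2 : Prop :=
  forall c, c \in S -> (#|assigned c| <= 2)%N /\
    exists2 B, B \in assigned c & c \in B.

Definition property3 : Prop :=
  forall a B, a \in S -> B \in assigned a -> a \notin B ->
    exists2 t, t \in B & exists q1 q2,
      [/\ q1 \in S, q2 \in S, q1 \in Poo a t & q2 \in Poo t a] /\
      ~~ in_disk q1 t /\ ~~ in_disk q2 t.

Definition decoupling_pair (i j : 'I_n) : Prop :=
  [/\ i \in S, j \in S, i != j, #|assigned i| = 1%N /\ #|assigned j| = 1%N &
      forall c, c \in S -> #|assigned c| = 2%N ->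
        exists B1 B2, [/\ B1 \in assigned c, B2 \in assigned c,
                          B1 \subset Poo i j & B2 \subset Poo j i]].

Definition centers_along (i j : 'I_n) : seq 'I_n :=
  [seq phi B | B <- undup [seq pblock A x | x <- walk i j & pblock A x \subset Pcc i j]].

Definition prefix_union (ord : seq 'I_n) (t : nat) : {set 'I_n} :=
  \bigcup_(c <- take t ord) group c.

(* B appears at one end of the sublist U (read as a list; when U is the whole
   cyclic list any cut point s is allowed) *)
Definition at_one_end (B U : {set 'I_n}) : Prop :=
  exists s len m : nat, [/\ (0 < len <= n)%N, (0 < m <= len)%N, U = arc s len &
    B = arc s m \/ B = arc (s + len - m)%N m].

End Defs.

(* Positions are measured counterclockwise from p_i. The sublist of p_i is the
   complement of a window [m0, r) of positions and the sublist of p_j is a window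
   [ja, jb) inside [m0, r). Centers are peeled off one at a time, keeping the union of
   the groups peeled so far equal to the complement of a gap [L, Q) around
   [ja, jb). The decoupling pair leaves every other center at most one sublist on
   each side of [ja, jb), and the center owning position L or the one owning
   position Q - 1 always has its sublists at the ends of the gap: otherwise the two
   groups would alternate around the convex polygon, which line separability
   forbids. Peeling ends with p_j. Property (ii) holds because every prefix union
   is a sublist containing p_i but not p_j. *)

From Pilot Require Import Defs.
From HB Require Import structures.
From mathcomp Require Import all_boot all_order all_algebra.
From mathcomp Require Import reals.
From mathcomp Require Import ring lra zify.
Import Order.TTheory GRing.Theory Num.Theory.

Set Implicit Arguments.
Unset Strict Implicit.
Unset Printing Implicit Defensive.

Section CyclicOffsets.
Variable n : nat.
Implicit Types (s v x y z : 'I_n) (m k len lo hi L Q : nat).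

Lemma offE s x : off s x = if s <= x then x - s else x + n - s.
Proof.
have xn := ltn_ord x; have sn := ltn_ord s; rewrite /off.
case: ifP => sx; last by rewrite modn_small //; lia.
have -> : x + n - s = (x - s) + n by lia.
by rewrite modnDr modn_small //; lia.
Qed.

Lemma off_lt s x : off s x < n.
Proof. by rewrite offE; have := ltn_ord x; have := ltn_ord s; case: ifP; lia. Qed.

Lemma off_id s : off s s = 0.
Proof. by rewrite offE leqnn subnn. Qed.

Lemma off_inj s : injective (off s).
Proof.
move=> x y; have := ltn_ord x; have := ltn_ord y; have := ltn_ord s.
by rewrite !offE => ? ? ? e; apply: val_inj => /=; move: e; do 2 case: ifP; lia.
Qed.

Lemma off_rebase b s x : off s x =
  if off b s <= off b x then off b x - off b s else off b x + n - off b s.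
Proof.
have := ltn_ord x; have := ltn_ord s; have := ltn_ord b.
by rewrite !offE; do 4 case: ifP; lia.
Qed.

Lemma off_rebase_lt s v x : off s x < off s v -> off v x = off s x + (n - off s v).
Proof. by rewrite (off_rebase s v x); have := off_lt s v; case: ifP; lia. Qed.

Lemma off_gt0 s v : s != v -> 0 < off s v.
Proof. by move=> sv; rewrite lt0n; apply: contra_neq sv; rewrite -(off_id s) => /off_inj. Qed.

Definition shift s m : 'I_n := insubd s ((s + m) %% n).

Lemma off_shift s k : k < n -> off s (shift s k) = k.
Proof.
move=> kn; have sn := ltn_ord s.
have e : (s + k) %% n = if s + k < n then s + k else s + k - n.
  case: ifP => h; first by rewrite modn_small.
  have nsk : n <= s + k by rewrite leqNgt h.
  by rewrite -{1}(subnK nsk) modnDr modn_small; lia.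
rewrite offE val_insubd ltn_pmod ?e; last lia.
by case: ifP; case: ifP; lia.
Qed.

(* [arc] alone would resolve to path.arc. *)
Lemma in_arc s len x : (x \in Defs.arc n s len) = (off s x < len).
Proof. by rewrite inE (modn_small (ltn_ord s)). Qed.

Lemma in_Pcc s v x : (x \in Pcc s v) = (off s x <= off s v).
Proof. by rewrite in_arc. Qed.

Lemma in_Poo_swap s v x : s != v -> (x \in Poo v s) = (off s v < off s x).
Proof.
move=> /off_gt0 sv; rewrite inE (off_rebase s v x) (off_rebase s v s) off_id.
by have := off_lt s x; have := off_lt s v; do 2 case: ifP; lia.
Qed.

Lemma Pcc_Poo_swap s v x : s != v -> x \in Pcc s v -> x \notin Poo v s.
Proof. by move=> sv; rewrite in_Pcc (in_Poo_swap _ sv) -leqNgt. Qed.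

Definition segment s lo hi : {set 'I_n} := [set x | lo <= off s x < hi].

Lemma segment_id s a : segment s a a = set0.
Proof. by apply/setP => x; rewrite !inE; lia. Qed.

Lemma sublist_off (U : {set 'I_n}) : is_sublist U ->
  exists b len, [/\ 0 < len <= n & forall x, (x \in U) = (off b x < len)].
Proof.
move=> [m [len [hlen ->]]]; have n0 : 0 < n by lia.
by exists (Ordinal (ltn_pmod m n0)), len; split => // x; rewrite inE.
Qed.

Lemma sublist_segment U v : is_sublist U -> v \notin U ->
  exists lo hi, [/\ 0 < lo < hi, hi <= n & U = segment v lo hi].
Proof.
move=> /sublist_off [b [len [hlen inU]]] vU.
have vb : len <= off b v by rewrite leqNgt -inU.
exists (n - off b v), (n - off b v + len); split; [have := off_lt b v; lia | lia |].
apply/setP => x; rewrite inU inE (off_rebase b v x).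
by have := off_lt b x; have := off_lt b v; case: ifP; lia.
Qed.

Lemma sublist_convex U v x y z : is_sublist U -> v \notin U -> x \in U -> z \in U ->
  off v x <= off v y <= off v z -> y \in U.
Proof.
move=> hU vU; have [lo [hi [_ _ ->]]] := sublist_segment hU vU.
by rewrite !inE; lia.
Qed.

Lemma sublist_cosegment U s : is_sublist U -> s \in U ->
  exists L Q, [/\ 0 < L, L <= Q <= n & U = ~: segment s L Q].
Proof.
move=> /sublist_off [b [len [hlen inU]]] sU.
have sb : off b s < len by rewrite -inU.
exists (len - off b s), (n - off b s); split; [lia | lia |].
apply/setP => x; rewrite inU !inE negb_and -!ltnNge (off_rebase b s x).
by have := off_lt b x; case: ifP; lia.
Qed.

Lemma arc_shift s k len : Defs.arc n (s + k) len = Defs.arc n (shift s k) len.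
Proof.
have n0 : 0 < n by have := ltn_ord s; lia.
by apply/setP => x; rewrite !inE val_insubd ltn_pmod // modn_mod.
Qed.

Lemma shift_mod s k : shift s (k %% n) = shift s k.
Proof. by apply: val_inj; rewrite /= !val_insubd modnDmr. Qed.

Lemma in_arc_shift s k len x : k <= n ->
  (x \in Defs.arc n (s + k) len) =
  ((if k <= off s x then off s x - k else off s x + n - k) < len).
Proof.
move=> kn; have n0 : 0 < n by have := ltn_ord s; lia.
have kE : k %% n = if k < n then k else 0.
  case: ifP => h; first by rewrite modn_small.
  have -> : k = n by lia.
  by rewrite modnn.
rewrite arc_shift -shift_mod in_arc (off_rebase s) off_shift ?ltn_pmod // kE.
by have := off_lt s x; case: ifP; do 2 case: ifP; lia.
Qed.

Lemma cosegment_arc s L Q : L <= Q <= n ->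
  ~: segment s L Q = Defs.arc n (s + Q) (n - Q + L).
Proof.
move=> h; apply/setP => x; rewrite in_arc_shift ?inE; last lia.
by have := off_lt s x; case: ifP; lia.
Qed.

Lemma cosegment_sublist s L Q : 0 < L -> L <= Q <= n -> is_sublist (~: segment s L Q).
Proof. by move=> L0 h; exists (s + Q), (n - Q + L); rewrite cosegment_arc //; split=> //; lia. Qed.

Lemma at_one_end_cosegment_left s L L' Q : L < L' -> L' <= Q <= n ->
  at_one_end (segment s L L') (~: segment s L' Q).
Proof.
move=> hL h; exists (s + Q), (n - Q + L'), (L' - L).
split; [lia | lia | exact: cosegment_arc |]; right.
have -> : s + Q + (n - Q + L') - (L' - L) = s + (n + L) by lia.
rewrite arc_shift -shift_mod modnDl shift_mod -arc_shift.
apply/setP => x; rewrite in_arc_shift ?inE; last lia.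
by have := off_lt s x; case: ifP; lia.
Qed.

Lemma at_one_end_cosegment_right s L Q Q' : 0 < L -> L <= Q < Q' -> Q' <= n ->
  at_one_end (segment s Q Q') (~: segment s L Q).
Proof.
move=> L0 hQ h; exists (s + Q), (n - Q + L), (Q' - Q).
split; [lia | lia | apply: cosegment_arc; lia |]; left.
apply/setP => x; rewrite in_arc_shift ?inE; last lia.
by have := off_lt s x; case: ifP; lia.
Qed.

Lemma at_one_end_self (U : {set 'I_n}) : is_sublist U -> at_one_end U U.
Proof. by move=> [s [len [h ->]]]; exists s, len, len; split=> //; [lia | left]. Qed.

Lemma segment_subset_bounds s a b c d : a < b <= n ->
  segment s a b \subset segment s c d -> c <= a /\ b <= d.
Proof.
move=> hab /subsetP sub.
have /sub : shift s a \in segment s a b by rewrite inE off_shift; lia.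
have /sub : shift s b.-1 \in segment s a b by rewrite inE off_shift; lia.
by rewrite !inE !off_shift; lia.
Qed.

End CyclicOffsets.

Section ConvexQuadrilaterals.
Local Open Scope ring_scope.
Variable R : realType.
Implicit Types (u v w z : R * R) (al be ga : R).

Lemma orient_rot u v w : orient u v w = orient v w u.
Proof. by rewrite /orient; ring. Qed.

Definition ccw4 u v w z : bool :=
  [&& 0 < orient u v w, 0 < orient u v z, 0 < orient u w z & 0 < orient v w z].

Lemma ccw4_rot u v w z : ccw4 u v w z -> ccw4 v w z u.
Proof.
by case/and4P => *; apply/and4P; split => //; rewrite -orient_rot.
Qed.

Lemma ccw4_no_splitting_line al be ga u v w z : ccw4 u v w z ->
  al * u.1 + be * u.2 <= ga -> al * w.1 + be * w.2 <= ga ->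
  ga < al * v.1 + be * v.2 -> ga < al * z.1 + be * z.2 -> False.
Proof.
case/and4P => uvw uvz uwz vwz hu hw hv hz.
(* The orientations are the weights of an affine dependence between {u, w} and {v, z}. *)
have dep : orient v w z * (al * u.1 + be * u.2 - ga) + orient u v z * (al * w.1 + be * w.2 - ga)
         = orient u w z * (al * v.1 + be * v.2 - ga) + orient u v w * (al * z.1 + be * z.2 - ga).
  by rewrite /orient; ring.
have : 0 < orient u w z * (al * v.1 + be * v.2 - ga) by rewrite mulr_gt0 // subr_gt0.
have : 0 < orient u v w * (al * z.1 + be * z.2 - ga) by rewrite mulr_gt0 // subr_gt0.
have : orient v w z * (al * u.1 + be * u.2 - ga) <= 0 by rewrite pmulr_rle0 // subr_le0.
have : orient u v z * (al * w.1 + be * w.2 - ga) <= 0 by rewrite pmulr_rle0 // subr_le0.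
lra.
Qed.

Lemma ccw4_not_weakly_sep n (p : 'I_n -> R * R) (X Y : {set 'I_n}) a b c d :
  ccw4 (p a) (p b) (p c) (p d) -> a \in X -> c \in X -> b \in Y -> d \in Y ->
  ~ weakly_sep p X Y.
Proof.
move=> h aX cX bY dY [al [be [ga [_ hX hY]]]].
exact: (ccw4_no_splitting_line h (hX a aX) (hX c cX) (hY b bY) (hY d dY)).
Qed.

Lemma interleaved_not_separable n (p : 'I_n -> R * R) (X Y : {set 'I_n}) a b c d :
  ccw4 (p a) (p b) (p c) (p d) -> a \in X -> c \in X -> b \in Y -> d \in Y ->
  ~ (weakly_sep p X Y \/ weakly_sep p Y X).
Proof.
move=> h aX cX bY dY [].
- exact: ccw4_not_weakly_sep h aX cX bY dY.
- exact: ccw4_not_weakly_sep (ccw4_rot h) bY dY cX aX.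
Qed.

Variables (n : nat) (p : 'I_n -> R * R).
Hypothesis hstd : standing_assumptions p.

Lemma orient_gt0 s a b c : (off s a < off s b < off s c)%N -> 0 < orient (p a) (p b) (p c).
Proof.
case: hstd => _ _ _ ccw h.
have : [|| (a < b < c)%N, (b < c < a)%N | (c < a < b)%N].
  move: h; rewrite !offE; have := ltn_ord a; have := ltn_ord b; have := ltn_ord c.
  by do 3 case: ifP; lia.
case/or3P => abc; first exact: ccw.
- by rewrite orient_rot; apply: ccw.
- by rewrite -orient_rot; apply: ccw.
Qed.

Lemma ccw4_off s a b c d : (off s a < off s b < off s c)%N -> (off s c < off s d)%N ->
  ccw4 (p a) (p b) (p c) (p d).
Proof. by move=> h1 h2; apply/and4P; split; apply: (orient_gt0 (s := s)); lia. Qed.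

End ConvexQuadrilaterals.

Lemma groups_not_interleaved (R : realType) n (p : 'I_n -> R * R) S A phi c d s x y z w :
  standing_assumptions p -> line_separable p A phi S ->
  c \in S -> d \in S -> c != d ->
  (off s x < off s y < off s z)%N -> (off s z < off s w)%N ->
  x \in group A phi c -> z \in group A phi c -> y \in group A phi d -> w \in group A phi d -> False.
Proof.
move=> hstd hsep cS dS cd h1 h2 xc zc yd wd.
exact: interleaved_not_separable (ccw4_off hstd h1 h2) xc zc yd wd (hsep c d cS dS cd).
Qed.

Section Assignment.
Variables (R : realType) (n : nat) (p : 'I_n -> R * R).
Variables (S : {set 'I_n}) (A : {set {set 'I_n}}) (phi : {set 'I_n} -> 'I_n).
Hypotheses (hpart : is_partition A) (hasg : is_assignment p A phi S)
  (hp2 : property2 A phi S).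

Local Notation center x := (phi (pblock A x)).

Lemma cover_A : cover A = [set: 'I_n].
Proof. by case: hpart => /and3P[/eqP]. Qed.

Lemma trivIset_A : trivIset A.
Proof. by case: hpart => /and3P[]. Qed.

Lemma pblock_in x : pblock A x \in A.
Proof. by rewrite pblock_mem // cover_A. Qed.

Lemma mem_pblock_self x : x \in pblock A x.
Proof. by rewrite mem_pblock cover_A. Qed.

Lemma pblockE B x : B \in A -> x \in B -> pblock A x = B.
Proof. exact: def_pblock trivIset_A. Qed.

Lemma block_sublist B : B \in A -> is_sublist B.
Proof. by case: hpart => _; apply. Qed.

Lemma block_nonempty B : B \in A -> exists x, x \in B.
Proof.
move=> BA; case: hpart => /and3P[_ _ A0] _.
have /set0Pn[x xB] : B != set0 by apply: contraNneq A0 => <-.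
by exists x.
Qed.

Lemma in_assigned c B : (B \in assigned A phi c) = (B \in A) && (phi B == c).
Proof. by rewrite inE. Qed.

Lemma assigned_in_A c B : B \in assigned A phi c -> B \in A.
Proof. by rewrite in_assigned => /andP[]. Qed.

Lemma pblock_assigned c x : (pblock A x \in assigned A phi c) = (center x == c).
Proof. by rewrite in_assigned pblock_in. Qed.

Lemma in_group c x : (x \in group A phi c) = (center x == c).
Proof.
apply/bigcupP/eqP => [[B]|<-].
  by rewrite in_assigned => /andP[BA /eqP <-] xB; rewrite (pblockE BA xB).
by exists (pblock A x); [rewrite pblock_assigned | exact: mem_pblock_self].
Qed.

Lemma in_prefix_union ord t x :
  (x \in prefix_union A phi ord t) = (center x \in take t ord).
Proof.
rewrite /prefix_union; elim: (take t ord) => [|c s IH]; first by rewrite big_nil inE.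
by rewrite big_cons inE IH in_group in_cons.
Qed.

Lemma center_in_S B : B \in A -> phi B \in S.
Proof. by case/hasg. Qed.

Lemma center_self c : c \in S -> center c = c.
Proof.
by case/hp2 => _ [B]; rewrite in_assigned => /andP[BA /eqP <-] /(pblockE BA) ->.
Qed.

Lemma assigned_card c : c \in S -> 0 < #|assigned A phi c| <= 2.
Proof. by case/hp2 => -> [B hB _]; rewrite andbT; apply/card_gt0P; exists B. Qed.

Lemma assigned1 c B : #|assigned A phi c| = 1 -> B \in assigned A phi c ->
  assigned A phi c = [set B].
Proof. by move/eqP/cards1P => [B' ->]; rewrite inE => /eqP ->. Qed.

Lemma assigned2 c B1 B2 : #|assigned A phi c| = 2 -> B1 \in assigned A phi c ->
  B2 \in assigned A phi c -> B1 != B2 -> assigned A phi c = [set B1; B2].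
Proof.
move=> c2 h1 h2 ne; apply/esym/eqP.
by rewrite eqEcard subUset !sub1set h1 h2 cards2 ne c2.
Qed.

Lemma assigned_card2 c B B' : c \in S -> B \in assigned A phi c ->
  B' \in assigned A phi c -> B != B' -> #|assigned A phi c| = 2.
Proof.
move=> cS hB hB' ne; have /andP[_ le2] := assigned_card cS.
have : #|[set B; B']| <= #|assigned A phi c|.
  by apply: subset_leq_card; rewrite subUset !sub1set hB hB'.
by rewrite cards2 ne; lia.
Qed.

Lemma walk_sorted (a b : 'I_n) : pairwise (fun y x => off a y < off a x) (walk a b).
Proof.
rewrite /walk pairwise_map.
apply: (@sub_in_pairwise _ (fun m => m < n) ltn).
- by move=> u v un vn /=; rewrite !off_shift.
- by apply/allP => m; rewrite mem_iota add0n ltnS => /leq_ltn_trans; apply; apply: off_lt.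
- by rewrite -sorted_pairwise; [exact: iota_ltn_sorted | exact: ltn_trans].
Qed.

Lemma centers_along_pairwise (a b : 'I_n) (r : rel 'I_n) :
  (forall y x, pblock A y \subset Pcc a b -> pblock A x \subset Pcc a b ->
     pblock A y != pblock A x -> off a y < off a x -> r (center y) (center x)) ->
  pairwise r (centers_along A phi a b).
Proof.
move=> hr; rewrite /centers_along pairwise_map.
set bs := undup _.
have distinct : pairwise (fun B B' => B != B') bs by rewrite -uniq_pairwise undup_uniq.
have guarded : pairwise (fun B B' => (B != B') ==> r (phi B) (phi B')) bs.
  apply: subseq_pairwise (undup_subseq _) _; rewrite pairwise_map.
  apply: (sub_in_pairwise (P := fun x => pblock A x \subset Pcc a b)); last 2 first.
  - exact: filter_all.
  - exact: pairwise_filter (walk_sorted a b).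
  by move=> y x hy hx lt; apply/implyP => ne; apply: hr.
have := pairwise_relI (fun B B' => B != B') (fun B B' => (B != B') ==> r (phi B) (phi B')) bs.
rewrite distinct guarded => /idP.
by apply: sub_pairwise => B B' /andP[ne /implyP]; apply.
Qed.

End Assignment.

Lemma decoupling_pair_sym n (S : {set 'I_n}) A phi i j :
  decoupling_pair A phi S i j -> decoupling_pair A phi S j i.
Proof.
case=> iS jS ij [i1 j1] h; split; rewrite 1?eq_sym //.
by move=> c cS /(h c cS) [B1 [B2 [h1 h2 s1 s2]]]; exists B2, B1.
Qed.

Lemma subseq_index_sorted (T : eqType) (s ord : seq T) : uniq ord -> {subset s <= ord} ->
  sorted (fun x y => index x ord < index y ord) s -> subseq s ord.
Proof.
move=> u so ss; apply/subseq_uniqP => //.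
have tr : transitive (fun x y => index x ord < index y ord) by move=> ? ? ?; apply: ltn_trans.
apply: (irr_sorted_eq tr) => //.
- by move=> x; rewrite ltnn.
- apply: sorted_filter => //; case: ord u {so ss tr} => // x0 t u.
  rewrite sorted_pairwise; last by move=> ? ? ?; apply: ltn_trans.
  by apply/(pairwiseP x0) => a b ha hb lt; rewrite !index_uniq.
- by move=> x; rewrite mem_filter; case: (boolP (x \in s)) => // /so ->.
Qed.

Section Decoupling.
Variables (R : realType) (n : nat) (p : 'I_n -> R * R).
Variables (S : {set 'I_n}) (A : {set {set 'I_n}}) (phi : {set 'I_n} -> 'I_n) (i j : 'I_n).
Hypotheses (hpart : is_partition A) (hasg : is_assignment p A phi S)
  (hp2 : property2 A phi S) (hdec : decoupling_pair A phi S i j).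

Local Notation center x := (phi (pblock A x)).

Let iS : i \in S. Proof. by case: hdec. Qed.
Let jS : j \in S. Proof. by case: hdec. Qed.
Let ij : i != j. Proof. by case: hdec. Qed.

Lemma decoupled_blocks c : c \in S -> #|assigned A phi c| = 2 ->
  exists B1 B2, [/\ assigned A phi c = [set B1; B2], B1 \subset Poo i j & B2 \subset Poo j i].
Proof.
move=> cS c2; case: hdec => _ _ _ _ /(_ c cS c2) [B1 [B2 [h1 h2 s1 s2]]].
exists B1, B2; split => //; apply: assigned2 => //; apply/eqP => e.
have [z zB1] := block_nonempty hpart (assigned_in_A h1).
have := subsetP s1 z zB1; rewrite inE => /andP[_ lt].
by move: (subsetP s2 z); rewrite -e (in_Poo_swap _ ij) => /(_ zB1); rewrite ltnNge (ltnW lt).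
Qed.

Lemma assigned_i : assigned A phi i = [set pblock A i].
Proof.
case: hdec => _ _ _ [i1 _] _; apply: assigned1 i1 _.
by rewrite (pblock_assigned phi hpart) (center_self hpart hp2 iS).
Qed.

Lemma i_notin_pblock_j : i \notin pblock A j.
Proof.
apply/negP => /(pblockE hpart (pblock_in hpart j)) e.
by move: ij; rewrite -(center_self hpart hp2 iS) e (center_self hpart hp2 jS) eqxx.
Qed.

Lemma same_side_centers_differ B B' : B \in A -> B' \in A -> B != B' ->
  B \subset Pcc i j -> B' \subset Pcc i j -> phi B != phi B'.
Proof.
move=> BA B'A ne sB sB'; apply/eqP => e.
have hB : B \in assigned A phi (phi B) by rewrite in_assigned BA eqxx.
have hB' : B' \in assigned A phi (phi B) by rewrite in_assigned B'A e eqxx.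
have cS := center_in_S hasg BA.
have c2 := assigned_card2 hp2 cS hB hB' ne.
have [C1 [C2 [e12 _ s2]]] := decoupled_blocks cS c2.
have hC2 : C2 \in assigned A phi (phi B) by rewrite e12 !inE eqxx orbT.
have [z zC2] := block_nonempty hpart (assigned_in_A hC2).
have zP : z \in Pcc i j.
  move: hC2; rewrite (assigned2 c2 hB hB' ne) => /set2P[] e2; rewrite e2 in zC2.
  - exact: (subsetP sB).
  - exact: (subsetP sB').
by move: (Pcc_Poo_swap ij zP); rewrite (subsetP s2 z zC2).
Qed.

End Decoupling.

Section OrderAlongArcs.
Variables (R : realType) (n : nat) (p : 'I_n -> R * R).
Variables (S : {set 'I_n}) (A : {set {set 'I_n}}) (phi : {set 'I_n} -> 'I_n) (i j : 'I_n).
Hypotheses (hpart : is_partition A) (hasg : is_assignment p A phi S)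
  (hp2 : property2 A phi S) (hdec : decoupling_pair A phi S i j).
Variable ord : seq 'I_n.
Hypotheses (ord_uniq : uniq ord) (mem_ord : forall x, (x \in ord) = (x \in S))
  (ord_first : nth i ord 0 = i) (ord_last : last i ord = j)
  (ord_sublists : forall t, 0 < t <= size ord -> is_sublist (prefix_union A phi ord t)).

Local Notation center x := (phi (pblock A x)).
Local Notation idx c := (index c ord).

Let iS : i \in S. Proof. by case: hdec. Qed.
Let jS : j \in S. Proof. by case: hdec. Qed.
Let ij : i != j. Proof. by case: hdec. Qed.

Lemma center_in_ord x : center x \in ord.
Proof. by rewrite mem_ord (center_in_S hasg) ?pblock_in. Qed.

Lemma index_first : idx i = 0.
Proof.
have : i \in ord by rewrite mem_ord.
by case: ord ord_first => //= a s -> _; rewrite eqxx.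
Qed.

Lemma index_lt_last c : c \in ord -> c != j -> idx c < idx j.
Proof.
have : j \in ord by rewrite mem_ord.
case/lastP: ord ord_uniq ord_last => // s a; rewrite last_rcons => u <-.
rewrite -cats1 !index_cat; move: u; rewrite rcons_uniq => /andP[/negbTE -> _] _ /=.
by rewrite eqxx addn0 mem_cat mem_seq1 => /orP[cs|->] //; rewrite cs index_mem.
Qed.

Lemma center_index_convex x y z : off j x <= off j y <= off j z ->
  center x != j -> center z != j -> idx (center y) <= maxn (idx (center x)) (idx (center z)).
Proof.
move=> hy xj zj; rewrite -ltnS; set t := (maxn _ _).+1.
have ltj : t <= idx j by rewrite /t gtn_max !index_lt_last ?center_in_ord.
have := sublist_convex (U := prefix_union A phi ord t) (v := j) _ _ _ _ hy.
rewrite !(in_prefix_union phi hpart) !in_take ?center_in_ord //.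
rewrite (center_self hpart hp2 jS) -leqNgt.
apply=> //; first apply: ord_sublists; rewrite ?ltnS ?leq_maxl ?leq_maxr //.
by rewrite (leq_trans ltj) // ltnW // index_mem mem_ord.
Qed.

Lemma index_neq x y : center x != center y -> idx (center x) != idx (center y).
Proof. by apply: contra_neq => /index_inj; apply; rewrite ?center_in_ord. Qed.

Lemma centers_along_forward :
  sorted (fun c d => idx c < idx d) (centers_along A phi i j).
Proof.
rewrite sorted_pairwise; last by move=> ? ? ?; apply: ltn_trans.
apply: centers_along_pairwise => y x hy hx ne lt.
have cd := same_side_centers_differ hpart hasg hp2 hdec
  (pblock_in hpart y) (pblock_in hpart x) ne hy hx.
have [xj|xj] := eqVneq (center x) j.
  by rewrite xj index_lt_last ?center_in_ord // -xj.
have xP := subsetP hx x (mem_pblock_self hpart x).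
have xnj : x != j.
  by apply: contra_neq xj => ->; rewrite (center_self hpart hp2 jS).
have xlt : off i x < off i j.
  by rewrite ltn_neqAle -in_Pcc xP andbT; apply: contra_neq xnj => /off_inj.
have ylt : off i y < off i j by rewrite (ltn_trans lt).
have ilt : off i i < off i j by rewrite off_id off_gt0.
have := center_index_convex (x := i) (y := y) (z := x).
rewrite (center_self hpart hp2 iS) index_first max0n.
rewrite !(off_rebase_lt ilt, off_rebase_lt ylt, off_rebase_lt xlt) off_id.
move=> /(_ _ ij xj) le; rewrite ltn_neqAle index_neq // le //.
by apply/andP; split; rewrite leq_add2r // ltnW.
Qed.

Lemma centers_along_backward :
  sorted (fun c d => idx c < idx d) (rev (centers_along A phi j i)).
Proof.
rewrite rev_sorted sorted_pairwise; last by move=> ? ? ? h1 h2; apply: ltn_trans h2 h1.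
apply: centers_along_pairwise => y x hy hx ne lt.
have cd := same_side_centers_differ hpart hasg hp2 (decoupling_pair_sym hdec)
  (pblock_in hpart y) (pblock_in hpart x) ne hy hx.
have [yj|yj] := eqVneq (center y) j.
  by rewrite yj index_lt_last ?center_in_ord // -yj eq_sym.
have xP := subsetP hx x (mem_pblock_self hpart x); rewrite in_Pcc in xP.
have := center_index_convex (x := y) (y := x) (z := i).
rewrite (center_self hpart hp2 iS) index_first maxn0.
rewrite (ltnW lt) xP => /(_ isT yj ij) le.
by rewrite ltn_neqAle index_neq 1?eq_sym // le.
Qed.

Lemma centers_along_subseq : subseq (centers_along A phi i j) ord /\
  subseq (rev (centers_along A phi j i)) ord.
Proof.
have along_ord a b c : c \in centers_along A phi a b -> c \in ord.
  by case/mapP => B; rewrite mem_undup => /mapP[x _ ->] ->; apply: center_in_ord.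
split; apply: subseq_index_sorted => //.
- exact: along_ord.
- exact: centers_along_forward.
- by move=> c; rewrite mem_rev; apply: along_ord.
- exact: centers_along_backward.
Qed.

End OrderAlongArcs.

Section GrowingByEnds.
Variables (n : nat) (A : {set {set 'I_n}}) (phi : {set 'I_n} -> 'I_n) (i : 'I_n).

Definition grows_by_ends (ord : seq 'I_n) : Prop :=
  forall t, 0 < t <= size ord -> is_sublist (prefix_union A phi ord t) /\
    forall B, B \in assigned A phi (nth i ord t.-1) -> at_one_end B (prefix_union A phi ord t).

Lemma prefix_union_subset ord t t' : t <= t' ->
  prefix_union A phi ord t \subset prefix_union A phi ord t'.
Proof.
by move=> le; rewrite /prefix_union -(subnKC le) takeD big_cat subsetUl.
Qed.

Lemma grows_by_ends_rcons ord c : grows_by_ends ord ->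
  is_sublist (prefix_union A phi (rcons ord c) (size ord).+1) ->
  (forall B, B \in assigned A phi c ->
     at_one_end B (prefix_union A phi (rcons ord c) (size ord).+1)) ->
  grows_by_ends (rcons ord c).
Proof.
move=> g U_sub U_ends t; rewrite size_rcons => /andP[t0]; rewrite leq_eqVlt.
case/orP => [/eqP ->|]; first by rewrite nth_rcons ltnn eqxx.
rewrite ltnS => lt; rewrite /prefix_union -cats1 takel_cat // nth_cat prednK // lt.
by apply: g; rewrite t0.
Qed.

End GrowingByEnds.

Section Peeling.
Variables (R : realType) (n : nat) (p : 'I_n -> R * R).
Variables (S : {set 'I_n}) (A : {set {set 'I_n}}) (phi : {set 'I_n} -> 'I_n) (i j : 'I_n).
Hypotheses (hstd : standing_assumptions p) (hpart : is_partition A)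
  (hasg : is_assignment p A phi S) (hsep : line_separable p A phi S)
  (hp2 : property2 A phi S) (hdec : decoupling_pair A phi S i j).

Local Notation pos := (off i).
Local Notation pt := (shift i).
Local Notation center x := (phi (pblock A x)).
Local Notation seg := (segment i).

Definition peeled pre L Q : Prop :=
  [/\ 0 < L <= Q, Q <= n, [/\ uniq pre, {subset pre <= S} & nth i pre 0 = i],
      forall x, (center x \in pre) = (x \notin seg L Q) & grows_by_ends A phi i pre].

Definition occupies c lo1 hi1 lo2 hi2 : Prop :=
  group A phi c = seg lo1 hi1 :|: seg lo2 hi2 /\
  forall B, B \in assigned A phi c -> B = seg lo1 hi1 \/ B = seg lo2 hi2.

Let iS : i \in S. Proof. by case: hdec. Qed.
Let jS : j \in S. Proof. by case: hdec. Qed.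
Let ij : i != j. Proof. by case: hdec. Qed.

Lemma center_pt_in_S k : center (pt k) \in S.
Proof. by rewrite (center_in_S hasg) ?pblock_in. Qed.

Lemma peeled_head pre L Q : peeled pre L Q -> i \in pre.
Proof.
case=> /andP[L0 _] _ _ cov _.
by rewrite -{1}(center_self hpart hp2 iS) cov inE off_id; lia.
Qed.

Lemma peeled_rcons pre L Q c L' Q' : peeled pre L Q -> L <= L' <= Q' -> Q' <= Q ->
  (L < L') || (Q' < Q) -> occupies c L L' Q' Q -> peeled (rcons pre c) L' Q'.
Proof.
move=> pe hL' hQ' grow [grp blk]; have ipre := peeled_head pe.
case: pe => /andP[L0 LQ] Qn [u sub hd] cov g.
have in_c x : (center x == c) = (x \in seg L L') || (x \in seg Q' Q).
  by rewrite -(in_group phi hpart) grp inE.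
have [k hk] : exists k, (L <= k < L') || (Q' <= k < Q).
  by exists (if L < L' then L else Q.-1); case: ifP; lia.
have ck : center (pt k) = c by apply/eqP; rewrite in_c !inE off_shift //; lia.
have cpre : c \notin pre by rewrite -ck cov !inE off_shift; lia.
have cov' x : (center x \in rcons pre c) = (x \notin seg L' Q').
  by rewrite mem_rcons in_cons in_c cov !inE; lia.
split; [lia | lia | split | exact: cov' |].
- by rewrite rcons_uniq cpre.
- by move=> x; rewrite mem_rcons in_cons => /orP[/eqP ->|/sub //]; rewrite -ck center_pt_in_S.
- by rewrite nth_rcons; case: (pre) ipre hd.
have U : prefix_union A phi (rcons pre c) (size pre).+1 = ~: seg L' Q'.
  by apply/setP => x; rewrite (in_prefix_union phi hpart) take_oversize ?cov' ?inE // size_rcons.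
apply: grows_by_ends_rcons g _ _; rewrite U; first by apply: cosegment_sublist; lia.
move=> B hB; have [x xB] := block_nonempty hpart (assigned_in_A hB).
case: (blk B hB) => eB; rewrite eB inE in xB; rewrite eB.
- by apply: at_one_end_cosegment_left; lia.
- by apply: at_one_end_cosegment_right; lia.
Qed.

Variables (ja jb : nat).
Hypotheses (hJ : pblock A j = seg ja jb) (ja_jb : ja < jb) (jb_n : jb <= n).

Lemma pos_j : ja <= pos j < jb.
Proof. by have := mem_pblock_self hpart j; rewrite hJ inE. Qed.

Let assigned_j := assigned_i hpart hp2 (decoupling_pair_sym hdec).

Lemma gap_block pre L Q c B : peeled pre L Q -> L <= ja -> jb <= Q ->
  c \notin pre -> c != j -> B \in assigned A phi c ->
  exists lo hi, [/\ L <= lo < hi, hi <= Q, (hi <= ja) || (jb <= lo) & B = seg lo hi].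
Proof.
move=> pe hL hQ cpre cj hB; have BA := assigned_in_A hB.
move: hB; rewrite in_assigned BA => /eqP ec.
have center_B x : x \in B -> center x = c by move/(pblockE hpart BA) ->.
have iB : i \notin B.
  by apply: contra cpre => /center_B <-; rewrite (center_self hpart hp2 iS) (peeled_head pe).
have [lo [hi [/andP[lo0 lohi] hin eB]]] := sublist_segment (block_sublist hpart BA) iB.
have in_gap k : lo <= k < hi -> L <= k < Q.
  move=> hk; case: pe => _ _ _ cov _.
  have /center_B ck : pt k \in B by rewrite eB inE off_shift //; lia.
  by move: cpre; rewrite -ck cov negbK inE off_shift //; lia.
exists lo, hi; split => //; [have := in_gap lo; lia | have := in_gap hi.-1; lia |].
apply/negPn/negP => overlap; move/eqP: cj; apply.
have /center_B <- : pt (maxn lo ja) \in B by rewrite eB inE off_shift; lia.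
by rewrite (pblockE hpart (pblock_in hpart j)) ?(center_self hpart hp2 jS) // hJ inE off_shift; lia.
Qed.

(* An empty side is normalised to [L, L) or [Q, Q). *)
Definition split_around_J c L Q lo1 hi1 lo2 hi2 : Prop :=
  [/\ [&& L <= lo1, lo1 <= hi1 & hi1 <= ja], [&& jb <= lo2, lo2 <= hi2 & hi2 <= Q],
      (lo1 < hi1) || (lo1 == L), (lo2 < hi2) || (hi2 == Q) & occupies c lo1 hi1 lo2 hi2].

Lemma gap_center_single pre L Q c B : peeled pre L Q -> L <= ja -> jb <= Q ->
  c \notin pre -> c != j -> assigned A phi c = [set B] ->
  exists lo1 hi1 lo2 hi2, split_around_J c L Q lo1 hi1 lo2 hi2.
Proof.
move=> pe hL hQ cpre cj e; have Qn : Q <= n by case: pe.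
have hB : B \in assigned A phi c by rewrite e set11.
have [lo [hi [h1 h2 side eB]]] := gap_block pe hL hQ cpre cj hB.
have grp : group A phi c = B by rewrite /group e big_set1.
case/orP: side => side.
- exists lo, hi, Q, Q; split; [lia | lia | lia | lia | split].
  + by rewrite grp segment_id setU0.
  + by move=> B'; rewrite e inE => /eqP ->; left.
- exists L, L, lo, hi; split; [lia | lia | lia | lia | split].
  + by rewrite grp segment_id set0U.
  + by move=> B'; rewrite e inE => /eqP ->; right.
Qed.

Lemma gap_center_double pre L Q c : peeled pre L Q -> L <= ja -> jb <= Q ->
  c \notin pre -> c != j -> c \in S -> #|assigned A phi c| = 2 ->
  exists lo1 hi1 lo2 hi2, split_around_J c L Q lo1 hi1 lo2 hi2.
Proof.
move=> pe hL hQ cpre cj cS c2; have Qn : Q <= n by case: pe.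
have [B1 [B2 [e12 s1 s2]]] := decoupled_blocks hpart hdec cS c2.
have hB1 : B1 \in assigned A phi c by rewrite e12 !inE eqxx.
have hB2 : B2 \in assigned A phi c by rewrite e12 !inE eqxx orbT.
have [lo1 [hi1 [/andP[L_lo1 lo1_hi1] hi1_Q side1 eB1]]] := gap_block pe hL hQ cpre cj hB1.
have [lo2 [hi2 [/andP[L_lo2 lo2_hi2] hi2_Q side2 eB2]]] := gap_block pe hL hQ cpre cj hB2.
have /andP[ja_j j_jb] := pos_j.
have in_pt lo hi : lo < hi -> hi <= Q -> pt lo \in seg lo hi.
  move=> lohi hiQ; have lon : lo < n := leq_trans lohi (leq_trans hiQ Qn).
  by rewrite inE off_shift // leqnn lohi.
have lo1_n : lo1 < n := leq_trans lo1_hi1 (leq_trans hi1_Q Qn).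
have lo2_n : lo2 < n := leq_trans lo2_hi2 (leq_trans hi2_Q Qn).
have left1 : lo1 < pos j.
  have := subsetP s1 (pt lo1); rewrite eB1 in_pt // => /(_ isT).
  by rewrite inE off_shift // => /andP[].
have right2 : pos j < lo2.
  have := subsetP s2 (pt lo2); rewrite eB2 in_pt // => /(_ isT).
  by rewrite (in_Poo_swap _ ij) off_shift.
have hi1_ja : hi1 <= ja.
  by case/orP: side1 => // jb_lo1; move: (ltn_trans left1 j_jb); rewrite ltnNge jb_lo1.
have jb_lo2 : jb <= lo2.
  case/orP: side2 => // hi2_ja.
  by move: (leq_trans (ltn_trans right2 lo2_hi2) hi2_ja); rewrite ltnNge ja_j.
exists lo1, hi1, lo2, hi2; split; rewrite ?lo1_hi1 ?lo2_hi2 //.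
- by rewrite L_lo1 (ltnW lo1_hi1) hi1_ja.
- by rewrite jb_lo2 (ltnW lo2_hi2) hi2_Q.
split; first by rewrite /group e12 bigcup_setU !big_set1 eB1 eB2.
by move=> B; rewrite e12 => /set2P[] ->; [left | right].
Qed.

Lemma gap_center pre L Q k : peeled pre L Q -> L <= ja -> jb <= Q ->
  L <= k < Q -> ~~ (ja <= k < jb) ->
  exists lo1 hi1 lo2 hi2, split_around_J (center (pt k)) L Q lo1 hi1 lo2 hi2.
Proof.
move=> pe hL hQ hk hkJ; have Qn : Q <= n by case: pe.
set c := center (pt k).
have hB : pblock A (pt k) \in assigned A phi c by rewrite (pblock_assigned phi hpart).
have cpre : c \notin pre by case: pe => _ _ _ -> _; rewrite inE off_shift ?negbK //; lia.
have cj : c != j.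
  apply: contra hkJ => /eqP cj; move: hB; rewrite cj assigned_j inE => /eqP eB.
  by have := mem_pblock_self hpart (pt k); rewrite eB hJ inE off_shift //; lia.
have cS := center_pt_in_S k.
have /andP[c_gt0 c_le2] := assigned_card hp2 cS.
have [c1|c1] := eqVneq #|assigned A phi c| 1.
- exact: gap_center_single pe hL hQ cpre cj (assigned1 c1 hB).
- apply: gap_center_double pe hL hQ cpre cj cS _.
  by apply/eqP; rewrite eqn_leq c_le2 ltn_neqAle eq_sym c1.
Qed.

Lemma in_group_pt c k lo1 hi1 lo2 hi2 : k < n -> occupies c lo1 hi1 lo2 hi2 ->
  (pt k \in group A phi c) = (lo1 <= k < hi1) || (lo2 <= k < hi2).
Proof. by move=> kn [-> _]; rewrite !inE off_shift. Qed.

Lemma center_at_left_end pre L Q : peeled pre L Q -> L < ja -> jb <= Q ->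
  exists hi1 lo2 hi2, split_around_J (center (pt L)) L Q L hi1 lo2 hi2 /\ L < hi1.
Proof.
move=> pe hL hQ; have Qn : Q <= n by case: pe.
have kQ : L <= L < Q by lia.
have kJ : ~~ (ja <= L < jb) by lia.
have [lo1 [hi1 [lo2 [hi2 sc]]]] := gap_center pe (ltnW hL) hQ kQ kJ.
have kn : L < n by lia.
have := sc; case=> b1 b2 _ _ /(in_group_pt kn) occ.
have : pt L \in group A phi (center (pt L)) by rewrite (in_group phi hpart).
rewrite occ => hL1.
have e : lo1 = L by lia.
by subst lo1; exists hi1, lo2, hi2; split => //; lia.
Qed.

Lemma center_at_right_end pre L Q : peeled pre L Q -> L <= ja -> jb < Q ->
  exists lo1 hi1 lo2, split_around_J (center (pt Q.-1)) L Q lo1 hi1 lo2 Q /\ lo2 < Q.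
Proof.
move=> pe hL hQ; have Qn : Q <= n by case: pe.
have kQ : L <= Q.-1 < Q by lia.
have kJ : ~~ (ja <= Q.-1 < jb) by lia.
have [lo1 [hi1 [lo2 [hi2 sc]]]] := gap_center pe hL (ltnW hQ) kQ kJ.
have kn : Q.-1 < n by lia.
have := sc; case=> b1 b2 _ _ /(in_group_pt kn) occ.
have : pt Q.-1 \in group A phi (center (pt Q.-1)) by rewrite (in_group phi hpart).
rewrite occ => hQ1.
have e : hi2 = Q by lia.
by subst hi2; exists lo1, hi1, lo2; split => //; lia.
Qed.

Lemma peeled_extend pre L Q c hi1 lo2 : peeled pre L Q ->
  split_around_J c L Q L hi1 lo2 Q -> (L < hi1) || (lo2 < Q) ->
  [/\ peeled (rcons pre c) hi1 lo2, hi1 <= ja, jb <= lo2 & lo2 - hi1 < Q - L].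
Proof.
move=> pe [b1 b2 _ _ occ] grow.
by split; [apply: peeled_rcons pe _ _ grow occ | lia | lia | lia]; lia.
Qed.

Lemma peeled_step pre L Q : peeled pre L Q -> L <= ja -> jb <= Q -> (L < ja) || (jb < Q) ->
  exists c L' Q', [/\ peeled (rcons pre c) L' Q', L' <= ja, jb <= Q' & Q' - L' < Q - L].
Proof.
move=> pe hL hQ gap.
have extend c hi1 lo2 : split_around_J c L Q L hi1 lo2 Q -> (L < hi1) || (lo2 < Q) ->
    exists c L' Q', [/\ peeled (rcons pre c) L' Q', L' <= ja, jb <= Q' & Q' - L' < Q - L].
  by move=> sc grow; exists c, hi1, lo2; apply: peeled_extend.
have [hLj|hLj] := ltnP L ja; last first.
  have hQj : jb < Q by lia.
  have [lo1 [hi1 [lo2 [sd lo2Q]]]] := center_at_right_end pe hL hQj.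
  have e : lo1 = L by case: sd; lia.
  by subst lo1; apply: extend sd _; rewrite lo2Q orbT.
have [hi1 [lo2 [hi2 [sc Lhi1]]]] := center_at_left_end pe hLj hQ.
have [e|ne] := eqVneq hi2 Q.
  by subst hi2; apply: extend sc _; rewrite Lhi1.
have hQj : jb < Q by case: sc; lia.
have [lo1' [hi1' [lo2' [sd lo2Q]]]] := center_at_right_end pe hL hQj.
have [e|ne'] := eqVneq lo1' L.
  by subst lo1'; apply: extend sd _; rewrite lo2Q orbT.
(* Otherwise the two end centers alternate at positions L < lo1' < lo2 < Q - 1. *)
exfalso; have Qn : Q <= n by case: pe.
case: sc => b1 b2 _ n2 [gc _]; case: sd => b1' b2' n1' _ [gd _].
have cd : center (pt L) != center (pt Q.-1).
  apply/eqP => e; have : pt L \in group A phi (center (pt L)) by rewrite (in_group phi hpart).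
  by rewrite e gd !inE off_shift; lia.
apply: (groups_not_interleaved hstd hsep (center_pt_in_S L) (center_pt_in_S Q.-1) cd
  (s := i) (x := pt L) (y := pt lo1') (z := pt lo2) (w := pt Q.-1)).
all: by rewrite ?gc ?gd ?inE !off_shift; lia.
Qed.

Lemma peeled_until_J pre L Q : peeled pre L Q -> L <= ja -> jb <= Q ->
  exists pre', peeled pre' ja jb.
Proof.
have [k] := ubnP (Q - L); elim: k pre L Q => // k IH pre L Q hk pe hL hQ.
have [gap|nogap] := boolP ((L < ja) || (jb < Q)).
  have [c [L' [Q' [pe' hL' hQ' lt]]]] := peeled_step pe hL hQ gap.
  by apply: IH pe' hL' hQ'; lia.
have [eL eQ] : L = ja /\ Q = jb by lia.
by exists pre; rewrite -eL -eQ.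
Qed.

Lemma peeled_init m0 r : pblock A i = ~: seg m0 r -> 0 < m0 -> m0 <= r <= n ->
  peeled [:: i] m0 r.
Proof.
move=> hI m0_gt0 hr.
have cov x : (center x \in [:: i]) = (x \notin seg m0 r).
  by rewrite mem_seq1 -(in_group phi hpart) /group (assigned_i hpart hp2 hdec) big_set1 hI inE.
split; [lia | lia | split => // | exact: cov |].
  by move=> x; rewrite mem_seq1 => /eqP ->; exact: iS.
have U : prefix_union A phi [:: i] 1 = pblock A i.
  by apply/setP => x; rewrite (in_prefix_union phi hpart) /= cov hI !inE.
have g0 : grows_by_ends A phi i [::] by move=> t /= ht; exfalso; lia.
have U_sub : is_sublist (~: seg m0 r) by apply: cosegment_sublist.
apply: (grows_by_ends_rcons g0); rewrite /= U hI // (assigned_i hpart hp2 hdec).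
by move=> B /set1P ->; rewrite hI; apply: at_one_end_self.
Qed.

Lemma peeled_complete ord L : peeled ord L L ->
  [/\ uniq ord, forall x, (x \in ord) = (x \in S), nth i ord 0 = i & grows_by_ends A phi i ord].
Proof.
case=> _ _ [u sub hd] cov g; split => // x; apply/idP/idP => [/sub //|xS].
by rewrite -(center_self hpart hp2 xS) cov segment_id inE.
Qed.

Lemma peeling_order : exists ord : seq 'I_n,
  [/\ uniq ord, forall x, (x \in ord) = (x \in S), nth i ord 0 = i, last i ord = j
     & grows_by_ends A phi i ord].
Proof.
have [m0 [r [m0_gt0 hr hI]]] :=
  sublist_cosegment (block_sublist hpart (pblock_in hpart i)) (mem_pblock_self hpart i).
have [m0_ja jb_r] : m0 <= ja /\ jb <= r.
  apply: (@segment_subset_bounds n i); first lia.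
  rewrite -hJ -[seg m0 r]setCK -hI; apply/subsetP => x xJ; rewrite inE.
  apply: contra (i_notin_pblock_j hpart hp2 hdec) => xI.
  by rewrite -(pblockE hpart (pblock_in hpart j) xJ) (pblockE hpart (pblock_in hpart i) xI)
    (mem_pblock_self hpart i).
have [pre pe] := peeled_until_J (peeled_init hI m0_gt0 hr) m0_ja jb_r.
have occ_j : occupies j ja jb jb jb.
  split; first by rewrite /group assigned_j big_set1 hJ segment_id setU0.
  by move=> B; rewrite assigned_j => /set1P ->; left.
have pe' : peeled (rcons pre j) jb jb by apply: peeled_rcons pe _ _ _ occ_j; lia.
have [u mem hd g] := peeled_complete pe'.
by exists (rcons pre j); split => //; rewrite last_rcons.
Qed.

End Peeling.

Local Open Scope ring_scope.

Theorem lemma5 (R : realType) (n : nat) (p : 'I_n -> R * R)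
  (w : 'I_n -> R) (S : {set 'I_n}) (A : {set {set 'I_n}})
  (phi : {set 'I_n} -> 'I_n) (i j : 'I_n) :
  standing_assumptions p ->
  (forall x, 0 < w x) ->
  optimal_dominating p w S ->
  is_partition A ->
  is_assignment p A phi S ->
  line_separable p A phi S ->
  property2 A phi S ->
  property3 p A phi S ->
  decoupling_pair A phi S i j ->
  exists ord : seq 'I_n,
    [/\ uniq ord /\ (forall x, (x \in ord) = (x \in S)) /\ size ord = #|S|,
        (* (i) *)
        nth i ord 0 = i /\ last i ord = j,
        (* (ii) *)
        subseq (centers_along A phi i j) ord /\
        subseq (rev (centers_along A phi j i)) ord,
        (* (iii) *)
        (forall t, (1 <= t <= #|S|)%N -> is_sublist (prefix_union A phi ord t)) /\
        (* (iv) *)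
        (forall t, (2 <= t <= #|S|)%N ->
           prefix_union A phi ord t.-1 \subset prefix_union A phi ord t)
      & (* (v) *)
        (forall t, (1 <= t <= #|S|)%N -> forall B, B \in assigned A phi (nth i ord t.-1) ->
           at_one_end B (prefix_union A phi ord t))].
Proof.
move=> hstd _ _ hpart hasg hsep hp2 _ hdec.
have [ja [jb [/andP[_ ja_jb] jb_n hJ]]] :=
  sublist_segment (block_sublist hpart (pblock_in hpart j)) (i_notin_pblock_j hpart hp2 hdec).
have [ord [uniq_ord mem_ord first_ord last_ord grows]] :=
  peeling_order hstd hpart hasg hsep hp2 hdec hJ ja_jb jb_n.
have size_ord : size ord = #|S| by rewrite -(card_uniqP uniq_ord); apply: eq_card.
have sub t : (0 < t <= size ord)%N -> is_sublist (prefix_union A phi ord t) by case/grows.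
rewrite -size_ord; exists ord; split => //.
- exact: (centers_along_subseq hpart hasg hp2 hdec uniq_ord mem_ord first_ord last_ord sub).
- by split=> // t _; apply: prefix_union_subset; rewrite leq_pred.
- by move=> t /grows [].
Qed.
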